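(* Let $N\ge1$. The set $\mathfrak{T}_N:=\{T_\Lambda:\Lambda\subseteq P_N\}$ is a subgroup of $\mathrm{Aut}(\mathbb{D}_N)_\pi\cap\mathrm{C}(\mathfrak{M}_N)$ isomorphic to $\{\pm1\}^N$, and $T_{\Lambda_1}T_{\Lambda_2}=T_{\Lambda_1\oplus\Lambda_2}$ for all $\Lambda_1,\Lambda_2\subseteq P_N$. Furthermore, $\mathfrak{T}_N$ acts on $\mathcal{E}$ by composition on the right ($\epsilon\mapsto\epsilon\circ T_\Lambda\in\mathcal{E}$), and $$F_N\big(u,T_\Lambda(w,a,\theta)\big)=(-1)^{|\Lambda|}\mathrm{e}\big(\mathrm{Tr}(\theta,\Lambda)\big)F_N(u,w,a,\theta)$$ for all $(w,a,\theta)\in\mathbb{D}_N$ and all $u\in\mathbb{C}$ away from singularities.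
   Context: $\mathrm{e}(z):=\mathrm{e}^{2\pi iz}$, $P_N=\{1,\dots,N\}$; vectors are functions on $P_N$, $v^{-1}[S]=\{\ell:v_\ell\in S\}$, $\mathrm{Tr}(v,\Lambda):=\sum_{\ell\in\Lambda}v_\ell$; $\oplus$ is symmetric difference. $\mathcal{C}:=\{z:\mathrm{Re}(z)>0\text{ or }z\in i\mathbb{R}_{>0}\}$. $\mathbb{D}_N:=\{(w,a,\theta)\in\mathbb{C}\times\mathbb{C}^N\times\mathbb{R}^N:a^{-1}[0]\subseteq\theta^{-1}[\mathbb{R}\smallsetminus\mathbb{Z}]\}$; $\pi(w,a,\theta):=w-\mathrm{Tr}(a,a^{-1}[-\mathcal{C}])$. $\mathrm{Aut}(\mathbb{D}_N)$: homeomorphisms of $\mathbb{D}_N$; $\mathrm{Aut}(\mathbb{D}_N)_\pi:=\{g:\pi\circ g=\pi\}$. $M_\alpha(w,a,\theta):=(\alpha w,\alpha a,\theta)$, $\mathfrak{M}_N=\{M_\alpha:\alpha\in\mathbb{C}^*\}$, $\mathrm{C}(\mathfrak{M}_N)$ its centralizer in $\mathrm{Aut}(\mathbb{D}_N)$. $T_\Lambda(w,a,\theta):=(w-\mathrm{Tr}(a,\Lambda),a\,d(\Lambda),\theta\,d(\Lambda))$ with $d(\Lambda)$ the diagonal matrix with entry $-1$ at $\ell\in\Lambda$ and $1$ otherwise. $F_N(u,w,a,\theta):=\mathrm{e}^{-uw}\prod_\ell(1-\mathrm{e}(\theta_\ell)\mathrm{e}^{-ua_\ell})^{-1}$. $\mathcal{E}$: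 the set of $\epsilon:\mathbb{D}_N\to\mathbb{R}_{>0}$ such that for all $(w,a,\theta)$ and $\ell$, $\mathrm{e}(\theta_\ell)=\mathrm{e}^{ua_\ell}$ has no solution with $0<|u|\le\epsilon(w,a,\theta)$. *)

From mathcomp Require Import all_boot all_order all_algebra.
From mathcomp Require Import complex.
From mathcomp Require Import reals sequences exp trigo.

Set Implicit Arguments.
Unset Strict Implicit.
Unset Printing Implicit Defensive.
Import Order.TTheory GRing.Theory Num.Theory.
Local Open Scope ring_scope.
Local Open Scope complex_scope.

Section Defs.
Variable R : realType.
Local Notation C := R[i].

Definition Cexp (z : C) : C :=
  (expR (complex.Re z))%:C * (cos (complex.Im z) +i* sin (complex.Im z)).

Definition ee (z : C) : C := Cexp ((2 * pi)%:C * 'i * z).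

Definition inCC (z : C) : bool := (0 < complex.Re z) || ((complex.Re z == 0) && (0 < complex.Im z)).
Definition inmCC (z : C) : bool := inCC (- z).

Variable N : nat.
(* P_N = {1..N} is modelled by 'I_N *)

Record pt := Pt { pw : C; pa : {ffun 'I_N -> C}; pth : {ffun 'I_N -> R} }.

Definition isInt (x : R) : Prop := exists k : int, x = k%:~R.

Definition inD (x : pt) : Prop := forall l, pa x l = 0 -> ~ isInt (pth x l).

Definition Tr (V : zmodType) (v : {ffun 'I_N -> V}) (L : {set 'I_N}) : V :=
  \sum_(l in L) v l.

Definition piD (x : pt) : C := pw x - \sum_(l | inmCC (pa x l)) pa x l.

(* diagonal entries of d(Lambda) *)
Definition dsign (L : {set 'I_N}) (l : 'I_N) : R := if l \in L then -1 else 1.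

Definition TL (L : {set 'I_N}) (x : pt) : pt :=
  Pt (pw x - Tr (pa x) L)
     [ffun l => (dsign L l)%:C * pa x l]
     [ffun l => dsign L l * pth x l].

Definition MA (al : C) (x : pt) : pt :=
  Pt (al * pw x) [ffun l => al * pa x l] (pth x).

Definition symdiff (A B : {set 'I_N}) : {set 'I_N} := (A :\: B) :|: (B :\: A).

Definition distD (x y : pt) : R :=
  Num.max (ComplexField.Normc.normc (pw x - pw y))
   (Num.max (\big[Num.max/0]_l ComplexField.Normc.normc (pa x l - pa y l))
            (\big[Num.max/0]_l `|pth x l - pth y l|%R)).

Definition contD (f : pt -> pt) : Prop :=
  forall x, inD x -> forall eps : R, 0 < eps ->
    exists2 delta : R, 0 < delta &
      forall y, inD y -> distD x y < delta -> distD (f x) (f y) < eps.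

Definition isAut (g : pt -> pt) : Prop :=
  (forall x, inD x -> inD (g x)) /\
  exists h : pt -> pt,
    [/\ forall x, inD x -> inD (h x),
        forall x, inD x -> h (g x) = x,
        forall x, inD x -> g (h x) = x,
        contD g & contD h].

Definition FN (u : C) (x : pt) : C :=
  Cexp (- u * pw x) *
  \prod_l (1 - ee (pth x l)%:C * Cexp (- u * pa x l))^-1.

Definition inEps (eps : pt -> R) : Prop :=
  forall x, inD x ->
    0 < eps x /\
    forall (l : 'I_N) (u : C),
      ee (pth x l)%:C = Cexp (u * pa x l) -> ~ (0 < ComplexField.Normc.normc u <= eps x).

End Defs.

(** [T_L] flips the signs of [a_l] and [theta_l] for [l] in [L] and
   shifts [w] by [-Tr(a, L)], so flips compose by multiplying sign vectors and
   each [T_L] is a Lipschitz involution of [D_N].  [pi] is preserved because for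
   [a <> 0] exactly one of [a], [-a] lies in the cone [C]: flipping [a_l] moves
   it in or out of [a^{-1}[-C]], which compensates the shift of [w].  For [F_N],
   with [y = e(theta_l) e^{-u a_l}] a flipped factor is
   [(1 - y^{-1})^{-1} = -y (1 - y)^{-1}]; the product of these [-y] is
   [(-1)^|L| e(Tr(theta, L)) e^{-u Tr(a, L)}], whose last factor cancels the
   change of [e^{-u w}]. *)

From mathcomp Require Import all_boot all_order all_algebra.
From mathcomp Require Import complex ring lra.
From mathcomp Require Import reals sequences exp trigo.

Set Implicit Arguments.
Unset Strict Implicit.
Unset Printing Implicit Defensive.
Import Order.TTheory GRing.Theory Num.Theory.
Local Open Scope ring_scope.
Local Open Scope complex_scope.

Section ComplexExponential.
Variable R : realType.
Local Notation C := R[i].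

Lemma CexpD (z1 z2 : C) : Cexp (z1 + z2) = Cexp z1 * Cexp z2.
Proof.
case: z1 z2 => [a b] [c d]; rewrite /Cexp /= expRD cosD sinD.
by apply/eqP; rewrite eq_complex /=; apply/andP; split; apply/eqP; ring.
Qed.

Lemma Cexp0 : Cexp (0 : C) = 1.
Proof.
rewrite /Cexp /= expR0 cos0 sin0.
by apply/eqP; rewrite eq_complex /=; apply/andP; split; apply/eqP; ring.
Qed.

Lemma CexpNK (z : C) : Cexp (- z) * Cexp z = 1.
Proof. by rewrite -CexpD addNr Cexp0. Qed.

Lemma Cexp_neq0 (z : C) : Cexp z != 0.
Proof. by apply: contra_eq_neq (CexpNK z) => ->; rewrite mulr0 eq_sym oner_eq0. Qed.

Lemma CexpN (z : C) : Cexp (- z) = (Cexp z)^-1.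
Proof. by apply: (mulIf (Cexp_neq0 z)); rewrite CexpNK mulVf ?Cexp_neq0. Qed.

Lemma Cexp_sum (I : Type) (r : seq I) (P : pred I) (F : I -> C) :
  Cexp (\sum_(i <- r | P i) F i) = \prod_(i <- r | P i) Cexp (F i).
Proof. exact: (big_morph _ CexpD Cexp0). Qed.

Lemma eeD (z1 z2 : C) : ee (z1 + z2) = ee z1 * ee z2.
Proof. by rewrite /ee mulrDr CexpD. Qed.

Lemma eeN (z : C) : ee (- z) = (ee z)^-1.
Proof. by rewrite /ee mulrN CexpN. Qed.

Lemma ee_neq0 (z : C) : ee z != 0.
Proof. exact: Cexp_neq0. Qed.

Lemma ee_sum (I : Type) (r : seq I) (P : pred I) (F : I -> R) :
  ee (\sum_(i <- r | P i) F i)%:C = \prod_(i <- r | P i) ee (F i)%:C.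
Proof. by rewrite rmorph_sum; apply: (big_morph _ eeD); rewrite /ee mulr0 Cexp0. Qed.

End ComplexExponential.

Lemma invf_1BV (F : fieldType) (y : F) : y != 0 -> y != 1 ->
  (1 - y^-1)^-1 = - y / (1 - y).
Proof. by move=> y0 y1; field; rewrite !subr_eq0 eq_sym y0 (negbTE y1). Qed.

Section Reflections.
Variables (R : realType) (N : nat).
Local Notation C := R[i].
Local Notation pt := (pt R N).
Implicit Types (L : {set 'I_N}) (x y : pt).

Lemma in_symdiff L1 L2 l : (l \in symdiff L1 L2) = (l \in L1) (+) (l \in L2).
Proof. by rewrite !inE; case: (l \in L1); case: (l \in L2). Qed.

Lemma dsignE L l : dsign R L l = (-1) ^+ (l \in L).
Proof. by rewrite /dsign; case: (l \in L). Qed.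

Lemma dsign_symdiff L1 L2 l :
  dsign R (symdiff L1 L2) l = dsign R L1 l * dsign R L2 l.
Proof. by rewrite !dsignE in_symdiff signr_addb. Qed.

Lemma dsign_inj L1 L2 : (forall l, dsign R L1 l = dsign R L2 l) -> L1 = L2.
Proof.
move=> eq12; apply/setP => l; move: (eq12 l); rewrite /dsign.
by case: (l \in L1); case: (l \in L2) => // eq_sign; exfalso; lra.
Qed.

Lemma dsign_surj (s : 'I_N -> R) : (forall l, s l = 1 \/ s l = -1) ->
  exists L, forall l, dsign R L l = s l.
Proof.
move=> s_pm; exists [set l | s l == -1] => l; rewrite /dsign inE.
by case: (s_pm l) => ->; rewrite ?eqxx // ifF //; apply/eqP; lra.
Qed.

Lemma pt_ext x y : pw x = pw y -> pa x =1 pa y -> pth x =1 pth y -> x = y.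
Proof.
by case: x y => [w a t] [w' a' t'] /= -> /ffunP -> /ffunP ->.
Qed.

Lemma pw_TL L x : pw (TL L x) = pw x - Tr (pa x) L.
Proof. by []. Qed.

Lemma pa_TL L x l : pa (TL L x) l = if l \in L then - pa x l else pa x l.
Proof.
by rewrite ffunE /dsign; case: (l \in L); rewrite ?rmorphN1 ?mulN1r ?mul1r.
Qed.

Lemma pth_TL L x l : pth (TL L x) l = if l \in L then - pth x l else pth x l.
Proof. by rewrite ffunE /dsign; case: (l \in L); rewrite ?mulN1r ?mul1r. Qed.

Lemma TL_set0 x : TL set0 x = x.
Proof.
apply: pt_ext => [|l|l]; rewrite ?pa_TL ?pth_TL ?inE //.
by rewrite pw_TL /Tr big_set0 subr0.
Qed.

Lemma Tr_pa_TL L1 L2 x :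
  Tr (pa (TL L2 x)) L1 + Tr (pa x) L2 = Tr (pa x) (symdiff L1 L2).
Proof.
rewrite /Tr big_mkcond [in X in _ + X]big_mkcond [RHS]big_mkcond -big_split /=.
apply: eq_bigr => l _; rewrite pa_TL in_symdiff.
by case: (l \in L1); case: (l \in L2); rewrite /= ?addr0 ?add0r ?addNr.
Qed.

Lemma TL_comp L1 L2 x : TL L1 (TL L2 x) = TL (symdiff L1 L2) x.
Proof.
apply: pt_ext => [|l|l].
- by rewrite !pw_TL -Tr_pa_TL opprD addrA addrAC.
- by rewrite !pa_TL in_symdiff; case: (l \in L1); case: (l \in L2); rewrite ?opprK.
- by rewrite !pth_TL in_symdiff; case: (l \in L1); case: (l \in L2); rewrite ?opprK.
Qed.

Lemma TL_involutive L x : TL L (TL L x) = x.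
Proof.
rewrite TL_comp (_ : symdiff L L = set0) ?TL_set0 //.
by apply/setP => l; rewrite in_symdiff addbb inE.
Qed.

Lemma isInt_opp (t : R) : isInt (- t) -> isInt t.
Proof. by case=> k tk; exists (- k); rewrite mulrNz -tk opprK. Qed.

Lemma inD_TL L x : inD x -> inD (TL L x).
Proof.
move=> Dx l; rewrite pa_TL pth_TL.
case: (l \in L); last exact: Dx.
by move/eqP; rewrite oppr_eq0 => /eqP /Dx not_int /isInt_opp.
Qed.

Lemma TL_MA L (al : C) x : TL L (MA al x) = MA al (TL L x).
Proof.
apply: pt_ext => [|l|//]; rewrite /MA /= ?ffunE.
- rewrite /Tr mulrBr mulr_sumr; congr (_ - _).
  by apply: eq_bigr => l _; rewrite ffunE.
- by rewrite mulrCA.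
Qed.

Lemma inCC_opp (a : C) : a != 0 -> inCC (- a) = ~~ inCC a.
Proof.
case: a => p q; rewrite /inCC /= eq_complex /= negb_and => pq0.
rewrite oppr_gt0 oppr_eq0 oppr_gt0.
case: (ltgtP p 0) => //= p0; move: pq0; rewrite p0 eqxx /=.
by case: (ltgtP q 0).
Qed.

Lemma inCC0 : inCC (0 : C) = false.
Proof. by rewrite /inCC /= ltxx andbF. Qed.

Lemma piD_TL L x : piD (TL L x) = piD x.
Proof.
rewrite /piD pw_TL /Tr -addrA -opprD; congr (_ - _).
rewrite big_mkcond [X in _ + X]big_mkcond [RHS]big_mkcond -big_split /=.
apply: eq_bigr => l _; rewrite pa_TL /inmCC.
case: (l \in L); rewrite ?add0r // opprK.
have [->|a0] := eqVneq (pa x l) 0; first by rewrite oppr0 inCC0 addr0.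
by rewrite (inCC_opp a0); case: (inCC (pa x l)); rewrite ?subrr ?addr0.
Qed.

End Reflections.

Lemma normc_sum_le (R : rcfType) (I : Type) (r : seq I) (P : pred I)
    (F : I -> R[i]) :
  ComplexField.Normc.normc (\sum_(i <- r | P i) F i)
    <= \sum_(i <- r | P i) ComplexField.Normc.normc (F i).
Proof.
elim/big_ind2: _ => [|z1 s1 z2 s2 le1 le2|//].
  by rewrite ComplexField.Normc.normc0.
exact: le_trans (le_normcD _ _) (lerD le1 le2).
Qed.

Section Continuity.
Variables (R : realType) (N : nat).
Local Notation nc := (@ComplexField.Normc.normc R).
Local Notation pt := (pt R N).
Implicit Types (L : {set 'I_N}) (x y : pt).

Lemma distD_ge_pw x y : nc (pw x - pw y) <= distD x y.
Proof. by rewrite /distD le_max lexx. Qed.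

Lemma distD_ge_pa x y l : nc (pa x l - pa y l) <= distD x y.
Proof.
by rewrite /distD !le_max (le_bigmax _ (fun l => nc (pa x l - pa y l))) orbT.
Qed.

Lemma distD_ge_pth x y l : `|pth x l - pth y l| <= distD x y.
Proof.
by rewrite /distD !le_max (le_bigmax _ (fun l => `|pth x l - pth y l|)) !orbT.
Qed.

Lemma distD_ge0 x y : 0 <= distD x y.
Proof.
apply: le_trans (distD_ge_pw x y).
by case: (pw x - pw y) => a b; apply: sqrtr_ge0.
Qed.

Lemma distD_le x y (B : R) : 0 <= B -> nc (pw x - pw y) <= B ->
  (forall l, nc (pa x l - pa y l) <= B) -> (forall l, `|pth x l - pth y l| <= B) ->
  distD x y <= B.
Proof. by move=> B0 lew lea leth; rewrite /distD !ge_max lew !bigmax_le. Qed.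

Lemma distD_TL_le L x y : distD (TL L x) (TL L y) <= N.+1%:R * distD x y.
Proof.
have D0 := distD_ge0 x y.
have le_ND z : z <= distD x y -> z <= N.+1%:R * distD x y.
  by move=> le_z; apply: le_trans le_z _; rewrite ler_peMl // ler1n.
apply: distD_le => [|||l]; first by rewrite mulr_ge0.
- have -> : pw (TL L x) - pw (TL L y) =
            (pw x - pw y) + \sum_(l in L) - (pa x l - pa y l).
    by rewrite !pw_TL /Tr sumrN sumrB; ring.
  apply: le_trans (le_normcD _ _) _.
  rewrite mulrSr mulrDl mul1r addrC lerD ?distD_ge_pw //.
  apply: le_trans (normc_sum_le _ _ _) _.
  under eq_bigr do rewrite normcN.
  apply: le_trans (ler_sum _ (fun l _ => distD_ge_pa x y l)) _.
  rewrite sumr_const -mulr_natl ler_wpM2r // ler_nat.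
  by rewrite -[X in (_ <= X)%N]card_ord max_card.
- move=> l; apply: le_ND; rewrite !pa_TL; case: (l \in L); last exact: distD_ge_pa.
  by rewrite -opprD normcN distD_ge_pa.
- apply: le_ND; rewrite !pth_TL; case: (l \in L); last exact: distD_ge_pth.
  by rewrite -opprD normrN distD_ge_pth.
Qed.

Lemma contD_lipschitz (f : pt -> pt) (K : R) : 0 < K ->
  (forall x y, distD (f x) (f y) <= K * distD x y) -> contD f.
Proof.
move=> K0 lip x _ eps eps0; exists (eps / K); first by rewrite divr_gt0.
move=> y _ dxy; apply: le_lt_trans (lip x y) _.
by rewrite mulrC -ltr_pdivlMr.
Qed.

Lemma isAut_involutive (f : pt -> pt) : (forall x, inD x -> inD (f x)) ->
  (forall x, inD x -> f (f x) = x) -> contD f -> isAut f.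
Proof. by move=> Df ff cf; split=> //; exists f. Qed.

Lemma isAut_TL L : isAut (@TL R N L).
Proof.
apply: isAut_involutive => [x|x _|]; [exact: inD_TL | exact: TL_involutive |].
by apply: (contD_lipschitz (K := N.+1%:R)) => //; apply: distD_TL_le.
Qed.

End Continuity.

Section Invariants.
Variables (R : realType) (N : nat).
Local Notation pt := (pt R N).
Implicit Types (L : {set 'I_N}) (x : pt).

Lemma TL_inj L1 L2 : (forall x, inD x -> TL L1 x = TL L2 x) -> L1 = L2.
Proof.
pose x0 : pt := Pt 0 [ffun=> 1] [ffun=> 0].
have Dx0 : inD x0 by move=> l; rewrite ffunE => /eqP; rewrite oner_eq0.
move=> /(_ x0 Dx0) eq12; apply/setP => l.
move: (congr1 (fun x => pa x l) eq12); rewrite !pa_TL ffunE.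
by case: (l \in L1); case: (l \in L2) => // /(congr1 (@complex.Re R)) /=; lra.
Qed.

Lemma inEps_TL (eps : pt -> R) L : inEps eps -> inEps (fun x => eps (TL L x)).
Proof.
move=> Eeps x Dx; have [eps_gt0 no_root] := Eeps _ (inD_TL (L := L) Dx).
split=> // l u root_l; apply: (no_root l u).
rewrite pth_TL pa_TL; case: (l \in L) => //.
by rewrite rmorphN eeN root_l mulrN CexpN.
Qed.

Lemma FN_TL L x u :
  (forall l, 1 - ee (pth x l)%:C * Cexp (- u * pa x l) != 0) ->
  FN u (TL L x) = (-1) ^+ #|L| * ee (Tr (pth x) L)%:C * FN u x.
Proof.
move=> nonsing.
pose y l := ee (pth x l)%:C * Cexp (- u * pa x l).
have y_neq0 l : y l != 0 := mulf_neq0 (ee_neq0 _) (Cexp_neq0 _).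
have y_neq1 l : y l != 1 by rewrite eq_sym -subr_eq0; exact: nonsing.
have factor_TL l : (1 - ee (pth (TL L x) l)%:C * Cexp (- u * pa (TL L x) l))^-1
    = (if l \in L then - y l else 1) * (1 - y l)^-1.
  rewrite pth_TL pa_TL; case: (l \in L); rewrite ?mul1r //.
  by rewrite rmorphN eeN mulrN CexpN -invfM (invf_1BV (y_neq0 l) (y_neq1 l)).
have prod_y : \prod_(l in L) y l = ee (Tr (pth x) L)%:C * Cexp (- u * Tr (pa x) L).
  by rewrite big_split /= -ee_sum -Cexp_sum mulr_sumr.
have w_TL : Cexp (- u * pw (TL L x)) = Cexp (- u * pw x) / Cexp (- u * Tr (pa x) L).
  by rewrite pw_TL mulrBr CexpD CexpN.
rewrite /FN (eq_bigr _ (fun l _ => factor_TL l)) big_split /= -big_mkcond /=.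
by rewrite prodrN prod_y w_TL; field; apply: Cexp_neq0.
Qed.

End Invariants.

Theorem lemma4 (R : realType) (N : nat) (hN : (1 <= N)%N) :
  (* each T_Lambda lies in Aut(D_N)_pi and in the centralizer of M_N *)
  (forall L : {set 'I_N}, isAut (@TL R N L)) /\
  (forall (L : {set 'I_N}) (x : pt R N), inD x -> piD (TL L x) = piD x) /\
  (forall (L : {set 'I_N}) (al : R[i]) (x : pt R N), al != 0 -> inD x ->
      TL L (MA al x) = MA al (TL L x)) /\
  (* subgroup structure: identity and T_{L1} T_{L2} = T_{L1 (+) L2} *)
  (forall x : pt R N, inD x -> TL set0 x = x) /\
  (forall (L1 L2 : {set 'I_N}) (x : pt R N), inD x ->
      TL L1 (TL L2 x) = TL (symdiff L1 L2) x) /\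
  (* T_Lambda |-> d(Lambda) in {+-1}^N is a well-defined isomorphism *)
  (forall L1 L2 : {set 'I_N},
      (forall x : pt R N, inD x -> TL L1 x = TL L2 x) <->
      (forall l, dsign R L1 l = dsign R L2 l)) /\
  (forall s : 'I_N -> R, (forall l, s l = 1 \/ s l = -1) ->
      exists L : {set 'I_N}, forall l, dsign R L l = s l) /\
  (forall (L1 L2 : {set 'I_N}) l,
      dsign R (symdiff L1 L2) l = dsign R L1 l * dsign R L2 l) /\
  (* action on E by right composition *)
  (forall (eps : pt R N -> R) (L : {set 'I_N}), inEps eps -> inEps (fun x => eps (TL L x))) /\
  (* transformation law of F_N away from singularities *)
  (forall (L : {set 'I_N}) (x : pt R N) (u : R[i]), inD x ->
      (forall l, 1 - ee (pth x l)%:C * Cexp (- u * pa x l) != 0) ->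
      FN u (TL L x) = (-1) ^+ #|L| * ee (Tr (pth x) L)%:C * FN u x).
Proof.
split; first exact: isAut_TL.
split; first by move=> L x _; apply: piD_TL.
split; first by move=> L al x _ _; apply: TL_MA.
split; first by move=> x _; apply: TL_set0.
split; first by move=> L1 L2 x _; apply: TL_comp.
split.
  by move=> L1 L2; split=> [/TL_inj -> // | /dsign_inj ->].
split; first exact: dsign_surj.
split; first exact: dsign_symdiff.
split; first exact: inEps_TL.
by move=> L x u _; apply: FN_TL.
Qed.
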